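(* There are infinitely many positive integers $N$ for which there are infinitely many pairs $(A,B)$ of antipalindromic numbers with $N=A/B$.
   Context: A positive integer $n$ is antipalindromic if its binary representation $w=w_1\cdots w_L$ (most significant digit first, no leading zeros) has even length $L$ and satisfies $w_i+w_{L+1-i}=1$ for all $i$. *)

From mathcomp Require Import all_boot.

Definition bitn (n j : nat) : nat := (n %/ 2 ^ j) %% 2.

Definition binlen (n : nat) : nat := (trunc_log 2 n).+1.

(* n is antipalindromic: n > 0, its binary word w_1...w_L (MSB first) has
   even length L and w_i + w_{L+1-i} = 1 for all i.  With w_i = bitn n (L - i),
   this is bitn n j + bitn n (L-1-j) = 1 for all j < L. *)
Definition antipalindromic (n : nat) : Prop :=
  0 < n /\ ~~ odd (binlen n) /\
  forall j, j < binlen n -> bitn n j + bitn n (binlen n - 1 - j) = 1.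

From mathcomp Require Import all_boot zify.

(* Read numbers as little-endian bit lists s (head = least significant bit).
   Then n = binval s is antipalindromic as soon as s ends with [true] and is
   fixed by [revcompl], reversal of the complement; evenness of the length comes
   for free, since the middle bit of an odd-length fixed word would equal its
   own complement.  Framing a fixed word w as 0^n w 1^n keeps it fixed.
   With c = 2^(r+1) - 1, the blocks X = 1^(r+2) 0^(r+2) and Y = 1 0^r 1 0 1^r 0
   are fixed, of equal length, and binval Y = c * binval X, so that
   binval (0^(r+1) Y^k 1^(r+1)) = 2^r c * binval (0 X^k 1) for every k:
   N = 2^r (2^(r+1) - 1) is a ratio of antipalindromic numbers in infinitely
   many ways, and N grows with r. *)

Fixpoint binval (s : seq bool) : nat :=
  if s is b :: s' then b + 2 * binval s' else 0.

Lemma binval_cat u v : binval (u ++ v) = binval u + 2 ^ size u * binval v.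
Proof.
elim: u => [|b u IHu] /=; first by rewrite expn0 mul1n.
by rewrite IHu expnS; lia.
Qed.

Lemma binval_lt s : binval s < 2 ^ size s.
Proof. by elim: s => [|b s IHs] //=; rewrite expnS; case: b; lia. Qed.

Lemma binval_ge s : last false s -> 2 ^ (size s).-1 <= binval s.
Proof.
case/lastP: s => [|t b] //; rewrite last_rcons => ->.
by rewrite -cats1 binval_cat size_cat addn1 /= muln1 leq_addl.
Qed.

Lemma binval_nseq_false n : binval (nseq n false) = 0.
Proof. by elim: n => //= n ->. Qed.

Lemma binval_nseq_true n : binval (nseq n true) = 2 ^ n - 1.
Proof. by elim: n => [|n /= ->] //; rewrite expnS; have := expn_gt0 2 n; lia. Qed.

Lemma bitn_binval s j : bitn (binval s) j = nth false s j.
Proof.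
rewrite /bitn; elim: s j => [|b s IHs] [|j] /=; rewrite ?div0n ?mod0n //.
  by rewrite expn0 divn1; case: b; lia.
rewrite -IHs expnS divnMA; congr (_ %/ _ %% 2).
by case: b; lia.
Qed.

Lemma binlen_binval s : last false s -> binlen (binval s) = size s.
Proof.
move=> last_s; have size_gt0 : 0 < size s by case: s last_s.
rewrite /binlen (@trunc_log_eq _ (size s).-1) ?prednK //.
by rewrite binval_ge // binval_lt.
Qed.

Definition revcompl (s : seq bool) : seq bool := rev (map negb s).

Lemma revcompl_cat u v : revcompl (u ++ v) = revcompl v ++ revcompl u.
Proof. by rewrite /revcompl map_cat rev_cat. Qed.

Lemma revcompl_nseq n b : revcompl (nseq n b) = nseq n (~~ b).
Proof. by rewrite /revcompl map_nseq rev_nseq. Qed.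

Lemma nth_revcompl {s j} :
  j < size s -> nth false (revcompl s) j = ~~ nth false s (size s - j.+1).
Proof.
move=> lt_j; rewrite nth_rev ?size_map // (nth_map false) //; lia.
Qed.

Lemma revcompl_fixed_even s : revcompl s = s -> ~~ odd (size s).
Proof.
move=> fixed_s; apply/negP => odd_s.
have size_s := odd_double_half (size s); rewrite odd_s in size_s.
have half_lt : (size s)./2 < size s by lia.
have := nth_revcompl half_lt; rewrite fixed_s.
have -> : size s - (size s)./2.+1 = (size s)./2 by lia.
by case: nth.
Qed.

Lemma antipalindromic_binval s :
  last false s -> revcompl s = s -> antipalindromic (binval s).
Proof.
move=> last_s fixed_s; rewrite /antipalindromic binlen_binval //.
split; first by apply: leq_trans _ (binval_ge s last_s); rewrite expn_gt0.
split=> [|j lt_j]; first exact: revcompl_fixed_even.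
rewrite !bitn_binval -{2}fixed_s nth_revcompl; last by lia.
by rewrite (_ : size s - (size s - 1 - j).+1 = j); [case: nth | lia].
Qed.

Definition rep k (w : seq bool) : seq bool := flatten (nseq k w).

Lemma size_rep k w : size (rep k w) = k * size w.
Proof. by elim: k => //= k IHk; rewrite size_cat -/(rep k w) IHk mulSn. Qed.

Lemma cat_rep_comm k w : rep k w ++ w = w ++ rep k w.
Proof. by elim: k => [|k IHk] /=; rewrite ?cats0 // -catA -/(rep k w) IHk. Qed.

Lemma revcompl_rep k w : revcompl (rep k w) = rep k (revcompl w).
Proof.
elim: k => //= k IHk.
by rewrite revcompl_cat -/(rep k w) IHk cat_rep_comm.
Qed.

Lemma binval_rep_scale {u w c} k :
  size u = size w -> binval u = c * binval w ->
  binval (rep k u) = c * binval (rep k w).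
Proof.
move=> size_uw val_uw; elim: k => [|k IHk] /=; first by rewrite muln0.
rewrite !binval_cat -!/(rep k _) IHk val_uw size_uw.
by rewrite mulnDr mulnCA.
Qed.

Definition frame n (w : seq bool) : seq bool := nseq n false ++ w ++ nseq n true.

Lemma binval_frame n w :
  binval (frame n w) = 2 ^ n * (binval w + 2 ^ size w * (2 ^ n - 1)).
Proof. by rewrite /frame !binval_cat binval_nseq_false binval_nseq_true size_nseq. Qed.

Lemma size_lt_binval_frame n w : 0 < n -> size w < binval (frame n w).
Proof.
move=> n_gt0; rewrite binval_frame.
have := ltn_expl (size w) (ltnSn 1); have := expn_gt0 2 (size w).
have : 1 < 2 ^ n by rewrite -{1}(expn0 2) ltn_exp2l.
nia.
Qed.

Lemma antipalindromic_frame n w :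
  0 < n -> revcompl w = w -> antipalindromic (binval (frame n w)).
Proof.
case: n => // n _ fixed_w; apply: antipalindromic_binval.
  by rewrite /frame !last_cat /=; elim: n.
by rewrite /frame !revcompl_cat !revcompl_nseq fixed_w catA.
Qed.

Definition den_block r : seq bool := nseq r.+2 true ++ nseq r.+2 false.

Definition num_block r : seq bool :=
  [:: true] ++ nseq r false ++ [:: true; false] ++ nseq r true ++ [:: false].

Lemma revcompl_den_block r : revcompl (den_block r) = den_block r.
Proof. by rewrite /den_block revcompl_cat !revcompl_nseq. Qed.

Lemma revcompl_num_block r : revcompl (num_block r) = num_block r.
Proof. by rewrite /num_block !revcompl_cat !revcompl_nseq -!catA. Qed.

Lemma size_num_block r : size (num_block r) = size (den_block r).
Proof. by rewrite /num_block /den_block !size_cat !size_nseq /=; lia. Qed.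

Lemma binval_num_block r :
  binval (num_block r) = (2 ^ r.+1 - 1) * binval (den_block r).
Proof.
rewrite /num_block /den_block !binval_cat ?size_cat !size_nseq /=.
rewrite !binval_nseq_false !binval_nseq_true !expnS.
by have := expn_gt0 2 r; set R := 2 ^ r; nia.
Qed.

Lemma binval_frame_blocks r k :
  binval (frame r.+1 (rep k (num_block r))) =
  2 ^ r * (2 ^ r.+1 - 1) * binval (frame 1 (rep k (den_block r))).
Proof.
have val_rep := binval_rep_scale k (size_num_block r) (binval_num_block r).
rewrite !binval_frame !size_rep size_num_block val_rep expnS.
by set c := 2 ^ r.+1 - 1; nia.
Qed.

Theorem theorem20 :
  forall M : nat, exists N : nat, M < N /\
    forall K : nat, exists A B : nat,
      K < B /\ antipalindromic A /\ antipalindromic B /\ A = N * B.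
Proof.
move=> M; exists (2 ^ M * (2 ^ M.+1 - 1)); split.
  have := ltn_expl M (ltnSn 1); have := ltn_expl M.+1 (ltnSn 1); nia.
move=> K; exists (binval (frame M.+1 (rep K (num_block M)))).
exists (binval (frame 1 (rep K (den_block M)))); split; [|split; [|split]].
- apply: leq_ltn_trans (size_lt_binval_frame 1 _ isT).
  by rewrite size_rep /den_block size_cat size_nseq; nia.
- by apply: antipalindromic_frame; rewrite // revcompl_rep revcompl_num_block.
- by apply: antipalindromic_frame; rewrite // revcompl_rep revcompl_den_block.
- exact: binval_frame_blocks.
Qed.
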